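(* Let $r\geq 3$ be an integer and $c>0$ a real number. If $G$ is a graph of order $n$ with minimum degree $$\delta(G)>\left(\frac{r-1}{r}+c\right)n,$$ then $$k_{r+1}(G)>c\,\frac{r}{r+1}\left(\frac{n}{r}\right)^{r+1}\qquad\text{and}\qquad js^{(2,r+1,2)}(G)>c\left(\frac{n}{r}\right)^{r-2}.$$
   Context: All graphs are finite and simple. $\delta(G)$ denotes the minimum degree of $G$ and $k_s(G)$ is the number of $s$-cliques of $G$. For an integer $r\geq 2$, $js^{(2,r+1,2)}(G)$ is the maximum, over all edges $uv$ of $G$, of the number of $(r+1)$-cliques of $G$ containing both $u$ and $v$ (and $0$ if $G$ has no edges). *)

From mathcomp Require Import all_boot all_order all_algebra.
Set Implicit Arguments. Unset Strict Implicit. Unset Printing Implicit Defensive.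

Definition simple_graph (T : finType) (e : rel T) : Prop :=
  symmetric e /\ irreflexive e.

Definition degree (T : finType) (e : rel T) (v : T) : nat := #|[set w | e v w]|.

(* minimum degree; 0 for the empty graph *)
Definition min_degree (T : finType) (e : rel T) : nat :=
  if [pick v : T] is Some v0 then \big[minn/degree e v0]_(v : T) degree e v else 0.

Definition is_clique (T : finType) (e : rel T) (K : {set T}) : bool :=
  [forall x in K, forall y in K, (x != y) ==> e x y].

Definition num_cliques (T : finType) (e : rel T) (s : nat) : nat :=
  #|[set K : {set T} | is_clique e K & #|K| == s]|.

Definition num_cliques_through (T : finType) (e : rel T) (s : nat) (u v : T) : nat :=
  #|[set K : {set T} | [&& is_clique e K, #|K| == s, u \in K & v \in K]]|.

(* js^{(2,r+1,2)}(G): max over edges uv; 0 if no edges *)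
Definition js2 (T : finType) (e : rel T) (r : nat) : nat :=
  \max_(p : T * T | e p.1 p.2) num_cliques_through e r.+1 p.1 p.2.

From mathcomp Require Import all_boot all_order all_algebra.
From mathcomp Require Import zify ring lra.
Import Order.TTheory GRing.Theory Num.Theory.
Set Implicit Arguments. Unset Strict Implicit. Unset Printing Implicit Defensive.

(* A set L of j vertices has at least j*d - (j-1)*n common neighbours, since
   each of its members misses at most n - d vertices; when d > ((r-1)/r + c) n
   this bound is nonnegative for j <= r, indeed at least (r-j) n / r.  Extending a
   clique K one common neighbour at a time reaches each clique L containing K
   with |L \ K| = m in exactly m! orders, so m! times the number of such L is at
   least the product of these bounds.  For K empty and m = r+1, resp. K an edge
   and m = r-1, the last factor exceeds r c n and the others give the powers
   of n/r. *)

Lemma card_bigcup_le (I T : finType) (A : {pred I}) (F : I -> {set T}) :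
  #|\bigcup_(i in A) F i| <= \sum_(i in A) #|F i|.
Proof.
elim/big_rec2: _ => [|i n U _ leUn]; first by rewrite cards0.
by apply: leq_trans (leq_card_setU _ _) _; rewrite leq_add2l.
Qed.

Lemma card_set_sum (J : finType) (B : {pred J}) (P : pred J) :
  #|[set j in B | P j]| = \sum_(j in B) P j.
Proof. by rewrite -sum1dep_card big_mkcondr. Qed.

Lemma double_count (I J : finType) (A : {pred I}) (B : {pred J}) (R : I -> J -> bool) :
  \sum_(i in A) #|[set j in B | R i j]| = \sum_(j in B) #|[set i in A | R i j]|.
Proof.
under eq_bigr do rewrite card_set_sum.
under [RHS]eq_bigr do rewrite card_set_sum.
exact: exchange_big.
Qed.

Section CliqueExtensions.
Variables (T : finType) (e : rel T).

Definition common_nbhd (K : {set T}) : {set T} := \bigcap_(u in K) [set v | e u v].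

Definition clique_extensions (K : {set T}) (m : nat) : {set {set T}} :=
  [set L | [&& is_clique e L, K \subset L & #|L| == #|K| + m]].

Lemma min_degree_le v : min_degree e <= degree e v.
Proof.
rewrite /min_degree; case: pickP => [v0 _|/(_ v)//].
have : v \in index_enum T by rewrite mem_index_enum.
elim: (index_enum T) => // u s IHs; rewrite inE big_cons.
case/orP=> [/eqP<-|/IHs]; first exact: geq_minl.
exact: leq_trans (geq_minr _ _).
Qed.

Lemma common_nbhd_card (K : {set T}) :
  #|T| + #|K| * min_degree e <= #|common_nbhd K| + #|K| * #|T|.
Proof.
have nonnbr_card u : #|~: [set v | e u v]| + min_degree e <= #|T|.
  by rewrite -(cardsC [set v | e u v]) addnC leq_add2r min_degree_le.
have := card_bigcup_le K (fun u => ~: [set v | e u v]).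
rewrite -setC_bigcap -/(common_nbhd K) => leC.
have := cardsC (common_nbhd K).
have : \sum_(u in K) #|~: [set v | e u v]| + #|K| * min_degree e <= #|K| * #|T|.
  by rewrite -!sum_nat_const -big_split; apply: leq_sum => u _; apply: nonnbr_card.
lia.
Qed.

Lemma in_common_nbhd K v : (v \in common_nbhd K) = [forall u in K, e u v].
Proof. by apply/bigcapP/forall_inP => H u /H; rewrite inE. Qed.

Lemma is_clique_set0 : is_clique e set0.
Proof. by apply/forall_inP => x; rewrite inE. Qed.

Hypothesis (esym : symmetric e) (eirr : irreflexive e).

Lemma common_nbhd_notin K v : v \in common_nbhd K -> v \notin K.
Proof. by rewrite in_common_nbhd => /forall_inP vN; apply/negP => /vN; rewrite eirr. Qed.

Lemma clique_setU1 K v :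
  is_clique e K -> v \in common_nbhd K -> is_clique e (v |: K).
Proof.
move=> /forall_inP cK; rewrite in_common_nbhd => /forall_inP vN.
apply/forall_inP => x /setU1P xK; apply/forall_inP => y /setU1P yK.
case: xK yK => [->|xK] [->|yK]; rewrite ?eqxx //.
- by rewrite esym vN ?implybT.
- by rewrite vN ?implybT.
- by move/forall_inP: (cK x xK); apply.
Qed.

Lemma is_clique_set2 u v : e u v -> is_clique e [set u; v].
Proof.
move=> euv; apply/forall_inP => x /set2P xuv; apply/forall_inP => y /set2P yuv.
by case: xuv yuv => -> [] ->; rewrite ?eqxx ?euv ?(esym v u) ?euv ?implybT.
Qed.

Lemma self_clique_extensions K : is_clique e K -> K \in clique_extensions K 0.
Proof. by move=> cK; rewrite inE cK subxx addn0 eqxx. Qed.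

Lemma sum_card_clique_extensions K m :
  \sum_(v in common_nbhd K) #|clique_extensions (v |: K) m|
    <= m.+1 * #|clique_extensions K m.+1|.
Proof.
set X := clique_extensions K m.+1.
have extS v : v \in common_nbhd K ->
    #|clique_extensions (v |: K) m| <= #|[set L in X | v \in L]|.
  move=> vN; apply/subset_leq_card/subsetP => L.
  rewrite !inE => /and3P[cL sKL /eqP cardL].
  rewrite cL (subset_trans (subsetUr _ _) sKL) (subsetP sKL) ?setU11 //.
  by rewrite cardL cardsU1 (common_nbhd_notin vN) add1n addSn addnS eqxx.
have new_vertices L : L \in X -> #|[set v in common_nbhd K | v \in L]| <= m.+1.
  rewrite inE => /and3P[_ sKL /eqP cardL].
  have : #|L :\: K| = m.+1 by rewrite cardsDS // cardL addKn.
  move <-; apply/subset_leq_card/subsetP => v; rewrite !inE.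
  by case/andP => /common_nbhd_notin -> ->.
apply: (@leq_trans (\sum_(v in common_nbhd K) #|[set L in X | v \in L]|)).
  exact: leq_sum.
rewrite double_count mulnC -sum_nat_const.
exact: leq_sum.
Qed.
End CliqueExtensions.

Local Open Scope ring_scope.

Section CliqueExtensionBound.
Variables (R : numDomainType) (T : finType) (e : rel T).
Hypothesis (esym : symmetric e) (eirr : irreflexive e).
Variable f : nat -> R.
Hypothesis f_le_common_nbhd :
  forall L : {set T}, is_clique e L -> f #|L| <= (#|common_nbhd e L|)%:R.

Lemma clique_extensions_lb m (K : {set T}) :
  is_clique e K -> (forall j, (j < m)%N -> 0 <= f (#|K| + j)) ->
  \prod_(j < m) f (#|K| + j) <= (m`!)%:R * (#|clique_extensions e K m|)%:R.
Proof.
elim: m K => [|m IHm] K cK f_ge0.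
  rewrite big_ord0 mul1r ler1n card_gt0; apply/set0Pn; exists K.
  exact: self_clique_extensions.
rewrite big_ord_recl addn0.
set P := \prod_(j < m) _.
have P_ge0 : 0 <= P by apply: prodr_ge0 => j _; apply: f_ge0.
have P_le v : v \in common_nbhd e K ->
    P <= (m`!)%:R * (#|clique_extensions e (v |: K) m|)%:R.
  move=> vN; have cardvK : #|v |: K| = (#|K|).+1.
    by rewrite cardsU1 (common_nbhd_notin eirr vN).
  rewrite /P; under eq_bigr => j _ do rewrite lift0 addnS -addSn -cardvK.
  apply: IHm => [|j ltjm]; first exact: clique_setU1.
  by rewrite cardvK addSnnS; apply: f_ge0.
apply: le_trans (ler_wpM2r P_ge0 (f_le_common_nbhd cK)) _.
rewrite -sum1_card natr_sum mulr_suml.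
apply: (@le_trans _ _ (\sum_(v in common_nbhd e K)
    (m`!)%:R * (#|clique_extensions e (v |: K) m|)%:R)).
  by apply: ler_sum => v /P_le; rewrite mul1r.
rewrite -mulr_sumr -natr_sum -!natrM ler_nat factS -mulnA mulnCA.
by rewrite leq_pmul2l ?fact_gt0 ?sum_card_clique_extensions.
Qed.
End CliqueExtensionBound.

Section CommonNeighbourhoodBound.
Variables (R : realFieldType) (r : nat) (c n d : R).
Hypotheses (r_gt0 : (0 < r)%N) (c_ge0 : 0 <= c) (n_ge0 : 0 <= n).
Hypothesis d_gt : ((r%:R - 1) / r%:R + c) * n < d.

Definition common_nbhd_bound (j : nat) : R := j%:R * d - (j%:R - 1) * n.

Lemma r_mul_d_gt : (r%:R - 1) * n + r%:R * c * n < r%:R * d.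
Proof.
have rP : 0 < r%:R :> R by rewrite ltr0n.
suff -> : (r%:R - 1) * n + r%:R * c * n = r%:R * (((r%:R - 1) / r%:R + c) * n).
  by rewrite ltr_pM2l.
by field; rewrite gt_eqF.
Qed.

Lemma common_nbhd_bound_top : r%:R * c * n < common_nbhd_bound r.
Proof. by have := r_mul_d_gt; rewrite /common_nbhd_bound; lra. Qed.

Lemma common_nbhd_bound_ge j :
  (j <= r)%N -> (r - j)%:R * (n / r%:R) <= common_nbhd_bound j.
Proof.
move=> le_jr; have rP : 0 < r%:R :> R by rewrite ltr0n.
rewrite natrB // mulrA ler_pdivrMr // /common_nbhd_bound.
have := r_mul_d_gt; have : 0 <= j%:R * (r%:R * c * n).
  by rewrite !mulr_ge0 ?ler0n.
have : j%:R <= r%:R :> R by rewrite ler_nat.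
have : 0 <= j%:R :> R by [].
nra.
Qed.

Lemma prod_common_nbhd_bound s : (s <= r)%N ->
  ((r - s)`!)%:R * (n / r%:R) ^+ (r - s)
    <= \prod_(j < r - s) common_nbhd_bound (s + j).
Proof.
move=> le_sr; set k := (r - s)%N.
have -> : (k`!)%:R * (n / r%:R) ^+ k = \prod_(j < k) ((k - j)%:R * (n / r%:R)).
  by rewrite big_split /= prodr_const card_ord -natr_prod -ffact_prod ffactnn.
apply: ler_prod => j _; rewrite mulr_ge0 ?divr_ge0 //=.
rewrite /k -subnDA common_nbhd_bound_ge //.
by have := ltn_ord j; rewrite /k; lia.
Qed.
End CommonNeighbourhoodBound.

Section MinDegree.
Variables (R : realFieldType) (r : nat) (c : R) (T : finType) (e : rel T).
Hypotheses (esym : symmetric e) (eirr : irreflexive e).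
Hypotheses (r_gt0 : (0 < r)%N) (c_gt0 : 0 < c).
Let n : R := (#|T|)%:R.
Let d : R := (min_degree e)%:R.
Hypothesis d_gt : ((r%:R - 1) / r%:R + c) * n < d.
Let g := common_nbhd_bound n d.

Lemma common_nbhd_bound_le_card (L : {set T}) : g #|L| <= (#|common_nbhd e L|)%:R.
Proof.
have := common_nbhd_card e L; rewrite -(ler_nat R) !natrD !natrM.
by rewrite /g /common_nbhd_bound -/n -/d; lra.
Qed.

Lemma card_gt0_of_min_degree : (0 < #|T|)%N.
Proof.
rewrite lt0n; apply/negP => /eqP T0; move: d_gt; rewrite /n /d T0 mulr0.
rewrite /min_degree; case: pickP => [v _|_]; last by rewrite ltxx.
by have := card0_eq T0 v.
Qed.

Lemma clique_extensions_gt (K : {set T}) : is_clique e K -> (#|K| <= r)%N ->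
  ((r - #|K|)`!)%:R * (n / r%:R) ^+ (r - #|K|) * (r%:R * c * n)
    < (((r - #|K|).+1)`!)%:R * (#|clique_extensions e K (r - #|K|).+1|)%:R.
Proof.
move=> cK le_Kr; set s := #|K|.
have n_gt0 : 0 < n by rewrite ltr0n card_gt0_of_min_degree.
have g_ge0 j : (j <= r)%N -> 0 <= g j.
  move=> le_jr; apply: le_trans (common_nbhd_bound_ge r_gt0 (ltW c_gt0) (ltW n_gt0) d_gt le_jr).
  by rewrite mulr_ge0 ?divr_ge0 ?ler0n // ltW.
have ext_lb : \prod_(j < (r - s).+1) g (s + j)
    <= (((r - s).+1)`!)%:R * (#|clique_extensions e K (r - s).+1|)%:R.
  apply: clique_extensions_lb => // [L _|j lt_j]; first exact: common_nbhd_bound_le_card.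
  by apply: g_ge0; rewrite /s; lia.
apply: lt_le_trans ext_lb; rewrite big_ord_recr /= subnKC //.
apply: (@lt_le_trans _ _ (((r - s)`!)%:R * (n / r%:R) ^+ (r - s) * g r)).
  rewrite ltr_pM2l ?common_nbhd_bound_top //.
  by rewrite pmulr_rgt0 ?ltr0n ?fact_gt0 // exprn_gt0 // divr_gt0 // ltr0n.
rewrite ler_wpM2r ?g_ge0 //.
exact: (prod_common_nbhd_bound r_gt0 (ltW c_gt0) (ltW n_gt0) d_gt le_Kr).
Qed.

Lemma num_cliques_gt :
  c * (r%:R / r.+1%:R) * (n / r%:R) ^+ r.+1 < (num_cliques e r.+1)%:R.
Proof.
have := clique_extensions_gt (is_clique_set0 e); rewrite cards0 subn0 => /(_ (leq0n r)).
have -> : clique_extensions e set0 r.+1 = [set K | is_clique e K & #|K| == r.+1].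
  by apply/setP => K; rewrite !inE sub0set cards0.
rewrite -/(num_cliques e r.+1) => ext_gt.
rewrite -(ltr_pM2l (_ : 0 < (r.+1)`!%:R)) ?ltr0n ?fact_gt0 //.
apply: le_lt_trans ext_gt.
have r_pos : 0 < r%:R :> R by rewrite ltr0n.
have -> : (r.+1)`!%:R * (c * (r%:R / r.+1%:R) * (n / r%:R) ^+ r.+1)
    = r`!%:R * (n / r%:R) ^+ r * (c * n).
  by rewrite factS natrM exprS; field; rewrite gt_eqF // addrC natr1 pnatr_eq0.
have n_ge0 : 0 <= n := ler0n _ _.
apply: ler_wpM2l; first by rewrite mulr_ge0 ?exprn_ge0 ?divr_ge0 ?ler0n.
by rewrite -mulrA ler_peMl ?mulr_ge0 ?ler1n // ltW.
Qed.

Lemma exists_edge_of_min_degree : exists u v, e u v.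
Proof.
have [v _] := card_gt0P card_gt0_of_min_degree.
have coef_ge0 : 0 <= (r%:R - 1) / r%:R + c.
  by apply: addr_ge0; [rewrite divr_ge0 ?subr_ge0 ?ler1n | exact: ltW].
have : (0 < min_degree e)%N.
  by rewrite -(ltr0n R) -/d; apply: le_lt_trans d_gt; rewrite mulr_ge0 ?ler0n.
move/leq_trans/(_ (min_degree_le e v)); rewrite /degree => /card_gt0P[w].
by rewrite inE; exists v, w.
Qed.

Lemma js2_gt : (2 <= r)%N -> c * (n / r%:R) ^+ (r - 2) < (js2 e r)%:R.
Proof.
move=> le2r; have [u [v euv]] := exists_edge_of_min_degree.
have card_uv : #|[set u; v]| = 2%N by rewrite cards2; case: eqP euv => // ->; rewrite eirr.
have := clique_extensions_gt (is_clique_set2 esym euv).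
rewrite card_uv => /(_ le2r) ext_gt.
have ext_le : (#|clique_extensions e [set u; v] (r - 2).+1| <= js2 e r)%N.
  apply: leq_trans (leq_bigmax_cond (F := fun p => num_cliques_through e r.+1 p.1 p.2) (u, v) euv).
  apply/subset_leq_card/subsetP => K; rewrite !inE card_uv.
  case/and3P => cK /subsetP sK /eqP cardK.
  by rewrite cK cardK (sK u) ?(sK v) ?set21 ?set22 //= addnS subnKC ?eqxx.
rewrite -(ltr_pM2l (_ : 0 < ((r - 2).+1)`!%:R)) ?ltr0n ?fact_gt0 //.
apply: le_lt_trans (lt_le_trans ext_gt _); last by rewrite ler_wpM2l ?ler0n // ler_nat.
have -> : ((r - 2).+1)`!%:R * (c * (n / r%:R) ^+ (r - 2))
    = (r - 2)`!%:R * (n / r%:R) ^+ (r - 2) * ((r - 2).+1%:R * c).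
  by rewrite factS natrM; ring.
apply: ler_wpM2l; first by rewrite mulr_ge0 ?exprn_ge0 ?divr_ge0 ?ler0n.
have n_ge1 : 1 <= n by rewrite ler1n card_gt0_of_min_degree.
apply: (@le_trans _ _ (r%:R * c)).
  by apply: ler_wpM2r; [exact: ltW | rewrite ler_nat; lia].
by rewrite ler_peMr // mulr_ge0 ?ler0n ?ltW.
Qed.
End MinDegree.

Theorem corollary2 (R : realFieldType) (r : nat) (c : R)
  (T : finType) (e : rel T) :
  (3 <= r)%N -> 0 < c -> simple_graph e ->
  (min_degree e)%:R > ((r%:R - 1) / r%:R + c) * (#|T|)%:R ->
  (num_cliques e r.+1)%:R > c * (r%:R / r.+1%:R) * ((#|T|)%:R / r%:R) ^+ r.+1
  /\ (js2 e r)%:R > c * ((#|T|)%:R / r%:R) ^+ (r - 2).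
Proof.
move=> le3r c_gt0 [esym eirr] d_gt; have r_gt0 : (0 < r)%N by lia.
split; first exact: num_cliques_gt.
by apply: (js2_gt esym eirr r_gt0 c_gt0 d_gt); lia.
Qed.
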